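(* Let $x\in\beta\mathbb{N}$ and $n\in\mathbb{N}$. Then there exists $\alpha\in\mathcal{A}$ with $\sigma(\alpha)=n$ and $F_\alpha\subseteq x$ if and only if $x\in\overline{L_n}$.
   Context: $\mathbb{N}=\{1,2,3,\dots\}$; $\beta\mathbb{N}$ is the Stone–Čech compactification of discrete $\mathbb{N}$, identified with the set of ultrafilters on $\mathbb{N}$ (natural numbers identified with principal ultrafilters). For $A\subseteq\mathbb{N}$, $\overline{A}=\{x\in\beta\mathbb{N}: A\in x\}$. $P$ is the set of prime numbers, $L_0=\{1\}$ and for $n\ge1$, $L_n=\{a_1a_2\cdots a_n: a_1,\dots,a_n\in P\}$ (products of exactly $n$ primes, counted with multiplicity). For $p\in\overline{P}$ and $k\in\mathbb{N}$, $p^k$ denotes the ultrafilter generated by the sets $A^k=\{a^k:a\in A\}$, $A\in p$; such ultrafilters are called basic, and $\mathcal{B}$ is the set of basic ultrafilters. $\mathcal{A}$ is the set of functions $\alpha:\mathcal{B}\to\mathbb{N}\cup\{0\}$ with finite support, written $\alpha=\{(p_1^{k_1},n_1),\dots,(p_m^{k_m},n_m)\}$ with $p_i\in\overline{P}$, the $p_i^{k_i}$ distinct and $n_i\ge1$ (and $\alpha(b)=0$ elsewhere). For such $\alpha$, $\sigma(\alpha)=\sum_{i=1}^m k_in_i$, and $F_\alpha$ is the family of all sets $(A_1^{k_1})^{(n_1)}(A_2^{k_2})^{(n_2)}\cdots(A_m^{k_m})^{(n_m)}=\{\prod_{i=1}^m\prod_{j=1}^{n_i}a_{i,j}^{k_i}: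 a_{i,j}\in A_i \text{ for all } i,j,\ \text{the } a_{i,j} \text{ pairwise distinct}\}$, where $A_i\in p_i$, $A_i\subseteq P$, $A_i=A_j$ if $p_i=p_j$, and $A_i\cap A_j=\emptyset$ otherwise. *)

From mathcomp Require Import all_boot.
Set Implicit Arguments. Unset Strict Implicit. Unset Printing Implicit Defensive.

Definition nset := nat -> Prop.

Definition Npos : nset := fun n => 0 < n.

(* Points of beta N: ultrafilters on N = {1,2,...}, presented as families
   of subsets of nat containing Npos (so every member meets N; a set A
   belongs to x iff A ∩ N does). *)
Definition is_ultrafilter (x : nset -> Prop) : Prop :=
  [/\ x Npos,
      ~ x (fun _ => False),
      (forall A B : nset, x A -> (forall t, A t -> B t) -> x B),
      (forall A B : nset, x A -> x B -> x (fun t => A t /\ B t)) &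
      (forall A : nset, x A \/ x (fun t => ~ A t))].

Definition Primes : nset := fun a => prime a.

(* \overline{A} ∋ x  iff  A ∈ x. *)
Definition in_closure (A : nset) (x : nset -> Prop) : Prop := x A.

Definition L (n : nat) : nset :=
  fun y => exists s : seq nat, [/\ size s = n, all prime s & y = \prod_(q <- s) q].

Definition upow (p : nset -> Prop) (k : nat) : nset -> Prop :=
  fun B => exists A : nset, p A /\ (forall a, A a -> B (a ^ k)).

Definition fam_eq (x y : nset -> Prop) : Prop := forall B, x B <-> y B.

(* An element alpha of \mathcal{A}: alpha = {(p_i^{k_i}, n_i) : i < m},
   given by m and the data p_i, k_i, n_i (indices i < m), with
   p_i in \overline{P}, k_i >= 1, n_i >= 1, and the p_i^{k_i} pairwise
   distinct. *)
Definition is_alpha (m : nat) (p : nat -> nset -> Prop) (k nn : nat -> nat) : Prop :=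
  [/\ (forall i, i < m -> is_ultrafilter (p i) /\ in_closure Primes (p i)),
      (forall i, i < m -> 0 < k i),
      (forall i, i < m -> 0 < nn i) &
      (forall i j, i < m -> j < m -> i <> j -> ~ fam_eq (upow (p i) (k i)) (upow (p j) (k j)))].

Definition sigma (m : nat) (k nn : nat -> nat) : nat := \sum_(i < m) k i * nn i.

Definition admissible (m : nat) (p : nat -> nset -> Prop) (A : nat -> nset) : Prop :=
  [/\ (forall i, i < m -> p i (A i)),
      (forall i, i < m -> forall t, A i t -> Primes t),
      (forall i j, i < m -> j < m -> fam_eq (p i) (p j) -> forall t, A i t <-> A j t) &
      (forall i j, i < m -> j < m -> ~ fam_eq (p i) (p j) -> forall t, ~ (A i t /\ A j t))].

(* The set (A_1^{k_1})^{(n_1)} ... (A_m^{k_m})^{(n_m)}: all products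
   prod_i prod_{j < n_i} a_{i,j}^{k_i} with a_{i,j} in A_i, pairwise distinct. *)
Definition Fset (m : nat) (k nn : nat -> nat) (A : nat -> nset) : nset :=
  fun y => exists a : nat -> nat -> nat,
    [/\ (forall i j, i < m -> j < nn i -> A i (a i j)),
        (forall i j i' j', i < m -> j < nn i -> i' < m -> j' < nn i' ->
           (i, j) <> (i', j') -> a i j <> a i' j') &
        y = \prod_(i < m) \prod_(j < nn i) (a i j) ^ (k i)].

Definition F_sub (m : nat) (p : nat -> nset -> Prop) (k nn : nat -> nat)
  (x : nset -> Prop) : Prop :=
  forall A : nat -> nset, admissible m p A -> x (Fset m k nn A).

From mathcomp Require Import all_boot.
From Stdlib Require Import Classical ClassicalEpsilon FunctionalExtensionality PropExtensionality.
Set Implicit Arguments. Unset Strict Implicit. Unset Printing Implicit Defensive.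

(* Write y in L_n as y = p^e z with p the least prime factor of y, e = logn p y
   and z in L_(n-e) not divisible by p.  If L_n is in x, then e is constant on a
   member of x, and the images of x under y |-> z and y |-> p are ultrafilters x'
   in closure(L_(n-e)) and q in closure(P).  By induction x' has a witness alpha';
   adding q^e to alpha' (or raising its multiplicity if q^e already occurs) gives
   a witness for x, since p^e z lies in the new F-set whenever z lies in the old
   one, p lies in the set chosen for q and p does not divide z.  Conversely,
   distinct ultrafilters are separated by a set, so admissible families exist,
   and each F-set consists of products of sigma(alpha) primes. *)

Section Ultrafilter.
Variable x : nset -> Prop.
Hypothesis hx : is_ultrafilter x.

Lemma uf_superset (A B : nset) : x A -> (forall t, A t -> B t) -> x B.
Proof. by case: hx => _ _ H _ _; apply: H. Qed.

Lemma uf_inter (A B : nset) : x A -> x B -> x (fun t => A t /\ B t).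
Proof. by case: hx => _ _ _ H _; apply: H. Qed.

Lemma uf_full : x (fun _ => True).
Proof. by case: hx => H _ _ _ _; apply: uf_superset H _. Qed.

Lemma uf_compl (A : nset) : ~ x A -> x (fun t => ~ A t).
Proof. by case: hx => _ _ _ _ H; case: (H A). Qed.

Lemma uf_nonempty (A : nset) : x A -> exists t, A t.
Proof.
move=> xA; apply: NNPP => A0; case: hx => _ []; apply: uf_superset xA _ => t At.
by apply: A0; exists t.
Qed.

Lemma uf_bigcap m (B : nat -> nset) : (forall l, l < m -> x (B l)) ->
  x (fun t => forall l, l < m -> B l t).
Proof.
elim: m => [|m IHm] xB; first by apply: uf_superset uf_full _.
have xBl := IHm (fun l lm => xB l (ltnW lm)).
apply: uf_superset (uf_inter xBl (xB m (ltnSn m))) _ => t [Bt Bmt] l.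
by rewrite ltnS leq_eqVlt => /predU1P [->|/Bt].
Qed.

Lemma uf_fiber (B : nset) (f : nat -> nat) N : x B -> (forall y, B y -> f y < N) ->
  exists2 v, v < N & x (fun y => B y /\ f y = v).
Proof.
elim: N B => [|N IHN] B xB fB; first by case: (uf_nonempty xB) => t /fB.
case: (classic (x (fun y => B y /\ f y = N))) => [|xN]; first by exists N.
case: (IHN _ (uf_inter xB (uf_compl xN))) => [y [By Ny]|v vN xv].
  by have := fB y By; rewrite ltnS leq_eqVlt => /predU1P [fyN|//]; case: Ny.
exists v; first exact: ltnW.
by apply: uf_superset xv _ => y [[]].
Qed.

End Ultrafilter.

Lemma uf_sub_fam_eq (u v : nset -> Prop) : is_ultrafilter u -> is_ultrafilter v ->
  (forall B, u B -> v B) -> fam_eq u v.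
Proof.
move=> hu hv uv B; split; first exact: uv.
move=> vB; apply: NNPP => /(uf_compl hu) /uv vnB.
by case: (uf_nonempty hv (uf_inter hv vB vnB)) => t [].
Qed.

Lemma fam_eq_sym (u v : nset -> Prop) : fam_eq u v -> fam_eq v u.
Proof. by move=> uv B; split => /uv. Qed.

Lemma fam_eq_eq (u v : nset -> Prop) : fam_eq u v -> u = v.
Proof.
by move=> uv; apply: functional_extensionality => B; apply: propositional_extensionality.
Qed.

Definition uf_image (f : nat -> nat) (x : nset -> Prop) : nset -> Prop :=
  fun B => x (fun y => B (f y)).

Lemma is_ultrafilter_image x f : is_ultrafilter x -> x (fun y => 0 < f y) ->
  is_ultrafilter (uf_image f x).
Proof.
move=> hx xf; case: (hx) => _ x0 _ _ xC; split => //.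
- by move=> A B xA AB; apply: (uf_superset hx xA) => y /AB.
- move=> A B xA xB; exact: (uf_inter hx xA xB).
- by move=> A; apply: xC.
Qed.

Lemma upow_sub (u v : nset -> Prop) k : is_ultrafilter v -> 0 < k ->
  (forall C, upow u k C -> upow v k C) -> forall B, u B -> v B.
Proof.
move=> hv k_gt0 uv B uB.
have [|A [vA AB]] := uv (fun c => exists2 b, B b & c = b ^ k).
  by exists B; split => // a Ba; exists a.
by apply: (uf_superset hv vA) => a /AB [b Bb /(expIn k_gt0) ->].
Qed.

Lemma upow_inj (u v : nset -> Prop) ku kv :
  is_ultrafilter u -> is_ultrafilter v -> u Primes -> v Primes -> 0 < ku -> 0 < kv ->
  fam_eq (upow u ku) (upow v kv) -> fam_eq u v /\ ku = kv.
Proof.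
move=> hu hv uP vP ku_gt0 kv_gt0 uv.
have ku_kv : ku = kv.
  have [|A [vA APk]] := (uv (fun c => exists2 a, prime a & c = a ^ ku)).1.
    by exists Primes; split => // a pa; exists a.
  have [a [Aa pa]] := uf_nonempty hv (uf_inter hv vA vP).
  have [b pb /(congr1 (logn a))] := APk a Aa.
  rewrite pfactorK // lognX logn_prime //.
  by case: eqP => [_|_]; rewrite ?muln1 // muln0 => kv0; rewrite kv0 in kv_gt0.
subst kv; split => //; apply: uf_sub_fam_eq => //.
by apply: (upow_sub hv ku_gt0) => C /uv.
Qed.

Definition uf_sep (u v : nset -> Prop) : nset :=
  epsilon (inhabits (fun _ => False)) (fun B => u B /\ v (fun t => ~ B t)).

Lemma uf_sepP u v : is_ultrafilter u -> is_ultrafilter v -> ~ fam_eq u v ->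
  u (uf_sep u v) /\ v (fun t => ~ uf_sep u v t).
Proof.
move=> hu hv uv; apply: (epsilon_spec _ (fun B => u B /\ v (fun t => ~ B t))).
apply: NNPP => nsep.
apply: uv; apply: uf_sub_fam_eq => // B uB; apply: NNPP => /(uf_compl hv) vnB.
by apply: nsep; exists B.
Qed.

Lemma admissible_exists m (p : nat -> nset -> Prop) :
  (forall i, i < m -> is_ultrafilter (p i) /\ p i Primes) -> exists A, admissible m p A.
Proof.
move=> hp.
pose Aof (u : nset -> Prop) : nset := fun t => prime t /\ forall l, l < m ->
  ~ fam_eq u (p l) -> uf_sep u (p l) t /\ ~ uf_sep (p l) u t.
exists (fun i => Aof (p i)); split.
- move=> i im; have [hu uP] := hp i im.
  apply: uf_inter => //; apply: uf_bigcap => // l lm.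
  have [hv _] := hp l lm.
  case: (classic (fam_eq (p i) (p l))) => [E|ne].
    by apply: (uf_superset hu (uf_full hu)) => t _ /(_ E).
  have [u_sep _] := uf_sepP hu hv ne.
  have [_ u_nsep] := uf_sepP hv hu (fun E => ne (fam_eq_sym E)).
  by apply: (uf_superset hu (uf_inter hu u_sep u_nsep)).
- by move=> i _ t [].
- by move=> i j _ _ /fam_eq_eq ->.
- move=> i j im jm ne t [[_ Ait] [_ Ajt]].
  by have [_ []] := Ait j jm ne; case: (Ajt i im (fun E => ne (fam_eq_sym E))).
Qed.

Lemma prod_primes_gt0 (s : seq nat) : all prime s -> 0 < \prod_(q <- s) q.
Proof. by move/allP=> ps; rewrite big_seq prodn_cond_gt0 // => q /ps /prime_gt0. Qed.

Lemma L_gt0 n y : L n y -> 0 < y.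
Proof. by case=> s [_ ps ->]; apply: prod_primes_gt0. Qed.

Lemma L_gt1 n y : 0 < n -> L n y -> 1 < y.
Proof.
move=> n_gt0 [[|q s] [sz ps ->]]; first by rewrite -sz in n_gt0.
case/andP: ps => pq ps.
by rewrite big_cons (leq_trans (prime_gt1 pq)) // leq_pmulr // prod_primes_gt0.
Qed.

Lemma L0P y : L 0 y <-> y = 1.
Proof.
split => [[s [/size0nil -> _ ->]]|->]; first by rewrite big_nil.
by exists [::]; rewrite big_nil.
Qed.

Lemma L_mul m n y z : L m y -> L n z -> L (m + n) (y * z).
Proof.
move=> [s [<- ps ->]] [r [<- pr ->]]; exists (s ++ r).
by rewrite size_cat all_cat ps pr big_cat.
Qed.

Lemma L_prime_pow q k : prime q -> L k (q ^ k).
Proof.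
move=> pq; exists (nseq k q); split; first exact: size_nseq.
  by rewrite all_nseq pq orbT.
by rewrite big_nseq; elim: k => //= k <-; rewrite expnS.
Qed.

Lemma logn_prod_primes p (s : seq nat) : prime p -> all prime s ->
  logn p (\prod_(q <- s) q) = count (pred1 p) s.
Proof.
move=> pp; elim: s => [|q s IHs] /=; first by rewrite big_nil logn1.
case/andP => pq ps; rewrite big_cons lognM ?(prime_gt0 pq) ?prod_primes_gt0 //.
by rewrite logn_prime // IHs // eq_sym.
Qed.

Lemma prod_pfactor_split p (s : seq nat) :
  \prod_(q <- s) q = p ^ count (pred1 p) s * \prod_(q <- filter (predC1 p) s) q.
Proof.
elim: s => [|q s IHs] /=; first by rewrite !big_nil.
rewrite big_cons IHs; case: eqP => [->|_] /=; first by rewrite expnS mulnA.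
by rewrite big_cons mulnCA.
Qed.

Lemma L_pfactor_cofactor p n y : prime p -> L n y ->
  logn p y <= n /\ L (n - logn p y) (y %/ p ^ logn p y).
Proof.
move=> pp [s [<- ps ->]]; rewrite logn_prod_primes //; split; first exact: count_size.
exists (filter (predC1 p) s); split.
- by rewrite size_filter -(count_predC (pred1 p) s) addKn.
- by rewrite all_filter; apply/allP => q qs /=; rewrite (allP ps q qs) implybT.
- by rewrite {1}(prod_pfactor_split p) mulKn // expn_gt0 prime_gt0.
Qed.

Lemma pfactor_cofactorE p y : y = p ^ logn p y * (y %/ p ^ logn p y).
Proof. by rewrite mulnC divnK // pfactor_dvdnn. Qed.

Lemma pfactor_cofactor_ndvd p y : prime p -> 0 < y -> ~~ (p %| y %/ p ^ logn p y).
Proof.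
move=> pp y_gt0; have pe_dvd := pfactor_dvdnn p y.
have pe_gt0 : 0 < p ^ logn p y by rewrite expn_gt0 prime_gt0.
have z_gt0 : 0 < y %/ p ^ logn p y by rewrite divn_gt0 // dvdn_leq.
by rewrite -[p in p %| _]expn1 pfactor_dvdn // logn_div // pfactorK // subnn.
Qed.

Definition pdiv_exp (y : nat) : nat := logn (pdiv y) y.

Definition pdiv_cofactor (y : nat) : nat := y %/ pdiv y ^ pdiv_exp y.

Lemma L_pdiv_split n y : 0 < n -> L n y ->
  [/\ prime (pdiv y), 0 < pdiv_exp y <= n, L (n - pdiv_exp y) (pdiv_cofactor y),
      y = pdiv y ^ pdiv_exp y * pdiv_cofactor y & ~~ (pdiv y %| pdiv_cofactor y)].
Proof.
move=> n_gt0 Ly; have y_gt1 := L_gt1 n_gt0 Ly.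
have pp := pdiv_prime y_gt1; have [le_n Lz] := L_pfactor_cofactor pp Ly.
split => //; last 2 first.
- exact: pfactor_cofactorE.
- by apply: pfactor_cofactor_ndvd; rewrite // ltnW.
by rewrite le_n andbT /pdiv_exp logn_gt0 mem_primes pp pdiv_dvd ltnW.
Qed.

Definition upd T (f : nat -> T) (i : nat) (v : T) : nat -> T :=
  fun j => if j == i then v else f j.

Lemma upd_same T (f : nat -> T) i v : upd f i v i = v.
Proof. by rewrite /upd eqxx. Qed.

Lemma upd_lt T (f : nat -> T) i v j : j < i -> upd f i v j = f j.
Proof. by move=> ji; rewrite /upd ltn_eqF. Qed.

Lemma upd_upd T (f : nat -> T) i v w : upd (upd f i v) i w = upd f i w.
Proof. by apply: functional_extensionality => j; rewrite /upd; case: eqP. Qed.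

Lemma sigma_incr m k nn i0 : i0 < m ->
  sigma m k (upd nn i0 (nn i0).+1) = sigma m k nn + k i0.
Proof.
move=> i0m; rewrite /sigma (bigD1 (Ordinal i0m)) // [in RHS](bigD1 (Ordinal i0m)) //=.
rewrite upd_same mulnS -addnA addnC; congr (_ + _ + _).
apply: eq_bigr => i /eqP ne; rewrite /upd; case: eqP => // E.
by case: ne; apply: val_inj.
Qed.

Lemma sigma_upd m k nn e c :
  sigma m.+1 (upd k m e) (upd nn m c) = sigma m k nn + e * c.
Proof.
rewrite /sigma big_ord_recr /= !upd_same; congr (_ + _).
by apply: eq_bigr => i _; rewrite !upd_lt.
Qed.

Lemma Fset_nil k nn A : Fset 0 k nn A 1.
Proof. by exists (fun _ _ => 0); split => //; rewrite big_ord0. Qed.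

Lemma L_Fset m k nn A y : (forall i, i < m -> forall t, A i t -> prime t) ->
  Fset m k nn A y -> L (sigma m k nn) y.
Proof.
move=> Aprime [a [aA _ ->]].
have -> : sigma m k nn = \sum_(i < m) \sum_(j < nn i) k i.
  by apply: eq_bigr => i _; rewrite sum_nat_const card_ord mulnC.
have L1 : L 0 1 by apply/L0P.
have Lmul c u d w : L c u -> L d w -> L (c + d) (u * w) by apply: L_mul.
apply: (big_ind2 L L1 Lmul) => i _; apply: (big_ind2 L L1 Lmul) => j _.
exact/L_prime_pow/(Aprime _ (ltn_ord i))/aA.
Qed.

Lemma dvdn_Fset_entry m k nn (a : nat -> nat -> nat) i j : i < m -> j < nn i -> 0 < k i ->
  a i j %| \prod_(i < m) \prod_(j < nn i) a i j ^ k i.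
Proof.
move=> im jn k_gt0; rewrite (bigD1 (Ordinal im)) // (bigD1 (Ordinal jn)) //=.
by rewrite -mulnA dvdn_mulr // dvdn_exp.
Qed.

Lemma Fset_incr m k nn A i0 q z : i0 < m -> (forall i, i < m -> 0 < k i) ->
  Fset m k nn A z -> A i0 q -> ~~ (q %| z) ->
  Fset m k (upd nn i0 (nn i0).+1) A (q ^ k i0 * z).
Proof.
move=> i0m k_gt0 [a [aA a_inj ->]] Aq q_ndvd.
pose is_new (i j : nat) := (i == i0) && (j == nn i0).
have slot i j : j < upd nn i0 (nn i0).+1 i -> is_new i j \/ j < nn i /\ ~~ is_new i j.
  rewrite /upd /is_new; case: eqP => [->|_] /=; last by right.
  by rewrite ltnS leq_eqVlt => /predU1P [->|jn]; [left|right; rewrite ltn_eqF].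
have q_fresh i j : i < m -> j < nn i -> a i j <> q.
  by move=> im jn aq; case/negP: q_ndvd; rewrite -aq dvdn_Fset_entry ?k_gt0.
exists (fun i j => if is_new i j then q else a i j); split.
- move=> i j im /slot [/andP [/eqP -> /eqP ->]|[jn /negbTE ->]]; last exact: aA.
  by rewrite /is_new !eqxx.
- move=> i j i' j' im /slot [new|[jn /negbTE ->]] i'm /slot [new'|[jn' /negbTE ->]] ne.
  + by move: new new' ne => /andP [/eqP -> /eqP ->] /andP [/eqP -> /eqP ->].
  + by rewrite new => /esym; apply: q_fresh.
  + by rewrite new'; apply: q_fresh.
  + exact: a_inj.
rewrite (bigD1 (Ordinal i0m)) // [in RHS](bigD1 (Ordinal i0m)) //= upd_same.
rewrite big_ord_recr /= /is_new /= !eqxx mulnCA mulnA; congr (_ * _ * _).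
  by apply: eq_bigr => j _; rewrite ltn_eqF.
apply: eq_bigr => i /eqP ne; have ne_i0 : (val i == i0) = false.
  by apply/eqP => E; case: ne; apply: val_inj.
by rewrite /upd ne_i0; apply: eq_bigr.
Qed.

Lemma Fset_upd0 m k nn A e z : Fset m k nn A z -> Fset m.+1 (upd k m e) (upd nn m 0) A z.
Proof.
move=> [a [aA a_inj ->]].
have old i j : i < m.+1 -> j < upd nn m 0 i -> i < m /\ j < nn i.
  by rewrite ltnS leq_eqVlt /upd => /predU1P [->|im]; rewrite ?eqxx // ltn_eqF.
exists a; split.
- by move=> i j im /old-/(_ im) [? ?]; apply: aA.
- move=> i j i' j' im /old-/(_ im) [? ?] i'm /old-/(_ i'm) [? ?]; exact: a_inj.
rewrite big_ord_recr /= upd_same big_ord0 muln1.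
by apply: eq_bigr => i _; rewrite !upd_lt.
Qed.

Lemma Fset_upd1 m k nn A e q z : 0 < e -> (forall i, i < m -> 0 < k i) ->
  Fset m k nn A z -> A m q -> ~~ (q %| z) ->
  Fset m.+1 (upd k m e) (upd nn m 1) A (q ^ e * z).
Proof.
move=> e_gt0 k_gt0 /(Fset_upd0 e) Fz Aq q_ndvd.
have k'_gt0 i : i < m.+1 -> 0 < upd k m e i.
  by rewrite ltnS leq_eqVlt => /predU1P [->|im]; rewrite ?upd_same ?upd_lt ?k_gt0.
by have := Fset_incr (ltnSn m) k'_gt0 Fz Aq q_ndvd; rewrite !upd_same upd_upd.
Qed.

Lemma L_of_F_sub x m p k nn : is_ultrafilter x -> is_alpha m p k nn ->
  F_sub m p k nn x -> x (L (sigma m k nn)).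
Proof.
move=> hx [hp _ _ _] xF; have [A admA] := admissible_exists hp.
by apply: (uf_superset hx (xF A admA)) => y; apply: L_Fset; case: admA.
Qed.

Lemma is_alpha_incr m p k nn i0 : is_alpha m p k nn -> is_alpha m p k (upd nn i0 (nn i0).+1).
Proof.
case=> hp k_gt0 nn_gt0 distinct; split => // i im.
by rewrite /upd; case: eqP => // _; apply: nn_gt0.
Qed.

Lemma is_alpha_upd m p k nn q e : is_alpha m p k nn ->
  is_ultrafilter q -> q Primes -> 0 < e ->
  (forall i, i < m -> ~ fam_eq (upow (p i) (k i)) (upow q e)) ->
  is_alpha m.+1 (upd p m q) (upd k m e) (upd nn m 1).
Proof.
case=> hp k_gt0 nn_gt0 distinct hq qP e_gt0 fresh.
split=> [i|i|i|i j]; rewrite ltnS leq_eqVlt => /predU1P [->|im].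
- by rewrite upd_same.
- by rewrite upd_lt //; apply: hp.
- by rewrite upd_same.
- by rewrite upd_lt //; apply: k_gt0.
- by rewrite upd_same.
- by rewrite upd_lt //; apply: nn_gt0.
- rewrite ltnS leq_eqVlt => /predU1P [->|jm] // _.
  by rewrite !upd_same !upd_lt // => E; apply: (fresh j jm); apply: fam_eq_sym.
- rewrite ltnS leq_eqVlt => /predU1P [->|jm] ij.
    by rewrite !upd_same !upd_lt //; apply: fresh.
  by rewrite !upd_lt //; apply: distinct.
Qed.

Lemma admissible_upd m p q A : admissible m.+1 (upd p m q) A -> admissible m p A.
Proof.
have lt i : i < m -> i < m.+1 by apply: ltnW.
case=> pA Aprime Aeq Adisj; split => [i im|i im|i j im jm|i j im jm].
- by have := pA i (lt i im); rewrite upd_lt.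
- exact: Aprime (lt i im).
- by have := Aeq i j (lt i im) (lt j jm); rewrite !upd_lt.
- by have := Adisj i j (lt i im) (lt j jm); rewrite !upd_lt.
Qed.

Definition alpha_witness (x : nset -> Prop) (n m : nat) (p : nat -> nset -> Prop)
  (k nn : nat -> nat) : Prop :=
  [/\ is_alpha m p k nn, sigma m k nn = n & F_sub m p k nn x].

Section InductionStep.
Variables (x : nset -> Prop) (n e : nat).
Hypotheses (hx : is_ultrafilter x) (n_gt0 : 0 < n).
Hypothesis xT : x (fun y => L n y /\ pdiv_exp y = e).

Local Notation q := (uf_image pdiv x).
Local Notation x' := (uf_image pdiv_cofactor x).

Lemma step_exp_bounds : 0 < e <= n.
Proof.
by have [y [Ly <-]] := uf_nonempty hx xT; case: (L_pdiv_split n_gt0 Ly).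
Qed.

Lemma step_pdiv_image : is_ultrafilter q /\ q Primes.
Proof.
split; last by apply: (uf_superset hx xT) => y [/(L_pdiv_split n_gt0) []].
apply: is_ultrafilter_image => //.
by apply: (uf_superset hx (uf_full hx)) => y _; apply: pdiv_gt0.
Qed.

Lemma step_cofactor_image : is_ultrafilter x' /\ x' (L (n - e)).
Proof.
split; last by apply: (uf_superset hx xT) => y [/(L_pdiv_split n_gt0) [_ _ Lz _ _] <-].
apply: is_ultrafilter_image => //.
by apply: (uf_superset hx xT) => y [/(L_pdiv_split n_gt0) [_ _ /L_gt0]].
Qed.

Lemma step_mul (S S' Q : nset) : x' S -> q Q ->
  (forall z t, S z -> Q t -> ~~ (t %| z) -> S' (t ^ e * z)) -> x S'.
Proof.
move=> x'S qQ SQS'; apply: (uf_superset hx (uf_inter hx (uf_inter hx xT x'S) qQ)).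
move=> y [[[Ly ey] Sz] Qt]; have [_ _ _ yE ndvd] := L_pdiv_split n_gt0 Ly.
by rewrite yE ey; apply: SQS'.
Qed.

Lemma witness_incr m p k nn i0 : alpha_witness x' (n - e) m p k nn ->
  i0 < m -> fam_eq (p i0) q -> k i0 = e ->
  alpha_witness x n m p k (upd nn i0 (nn i0).+1).
Proof.
case=> ha sigma_nn xF i0m pq ke; have [_ e_le_n] := andP step_exp_bounds.
split; first exact: is_alpha_incr.
  by rewrite sigma_incr // sigma_nn ke subnK.
move=> A admA; apply: (step_mul (xF A admA) (Q := A i0)).
  by case: admA => pA _ _ _; apply/pq/pA.
by move=> z t Fz At; rewrite -ke; apply: Fset_incr => //; case: ha.
Qed.

Lemma witness_upd m p k nn : alpha_witness x' (n - e) m p k nn ->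
  (forall i, i < m -> ~ fam_eq (upow (p i) (k i)) (upow q e)) ->
  alpha_witness x n m.+1 (upd p m q) (upd k m e) (upd nn m 1).
Proof.
case=> ha sigma_nn xF fresh; have [e_gt0 e_le_n] := andP step_exp_bounds.
have [hq qP] := step_pdiv_image.
split; first exact: is_alpha_upd.
  by rewrite sigma_upd muln1 sigma_nn subnK.
move=> A admA; apply: (step_mul (xF A (admissible_upd admA)) (Q := A m)).
  by case: admA => /(_ m (ltnSn m)); rewrite upd_same.
by move=> z t Fz At; apply: Fset_upd1 => //; case: ha.
Qed.

End InductionStep.

Lemma alpha_witness_of_L n x : is_ultrafilter x -> x (L n) ->
  exists m p k nn, alpha_witness x n m p k nn.
Proof.
elim/ltn_ind: n x => n IHn x hx xL; have [n0|n_gt0] := posnP n.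
  exists 0, (fun _ => x), (fun _ => 1), (fun _ => 1); rewrite n0 in xL *.
  split; [by split | by rewrite /sigma big_ord0 |].
  by move=> A _; apply: (uf_superset hx xL) => y /L0P ->; apply: Fset_nil.
have [e _ xT] : exists2 e, e < n.+1 & x (fun y => L n y /\ pdiv_exp y = e).
  by apply: (uf_fiber hx xL) => y /(L_pdiv_split n_gt0) [_ /andP []].
have [e_gt0 _] := andP (step_exp_bounds hx n_gt0 xT).
have [hx' x'L] := step_cofactor_image hx n_gt0 xT.
have [hq qP] := step_pdiv_image hx n_gt0 xT.
have [|m [p [k [nn w]]]] := IHn (n - e) _ _ hx' x'L; first by rewrite ltn_subrL e_gt0.
set q := uf_image pdiv x in hq qP *.
case: (classic (exists2 i0, i0 < m & fam_eq (upow (p i0) (k i0)) (upow q e))).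
  case=> i0 i0m same; case: (w) => [[hp k_gt0 _ _] _ _]; have [hpi0 pi0P] := hp i0 i0m.
  have [pq ke] := upow_inj hpi0 hq pi0P qP (k_gt0 i0 i0m) e_gt0 same.
  by exists m, p, k, (upd nn i0 (nn i0).+1); apply: witness_incr w i0m pq ke.
move=> fresh; exists m.+1, (upd p m q), (upd k m e), (upd nn m 1).
by apply: witness_upd w _ => // i im same; apply: fresh; exists i.
Qed.

Theorem theorem2p7 (x : nset -> Prop) (n : nat) :
  is_ultrafilter x -> 0 < n ->
  ((exists (m : nat) (p : nat -> nset -> Prop) (k nn : nat -> nat),
      [/\ is_alpha m p k nn, sigma m k nn = n & F_sub m p k nn x])
   <-> in_closure (L n) x).
Proof.
move=> hx _; split => [[m [p [k [nn [ha <- xF]]]]]|]; first exact: L_of_F_sub hx ha xF.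
exact: alpha_witness_of_L.
Qed.
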